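(* In the setting described in the context, consider the optimization problem $$\max_{\boldsymbol\alpha}\ \min_{(i,\theta_b)\in\Xi}W_i(\theta_b)G_i(\theta_b)\quad\text{subject to}\quad\sum_{i=1}^k\sum_{b=1}^B\alpha_i(\theta_b)=1,\ \alpha_i(\theta_b)\ge0.$$ An allocation $\boldsymbol\alpha$ is optimal for this problem if and only if it satisfies all of the following: (i) (global balance) for all $1\le b\le B$, $\ \alpha_{i^b}^2(\theta_b)/\lambda_{i^b}^2(\theta_b)=\sum_{i\ne i^b,\,i\ne i^*}\alpha_i^2(\theta_b)/\lambda_i^2(\theta_b)$; (ii) (pairwise balance) for all $(i,\theta_b),(j,\theta_{b'})\in\Xi$, $\ W_i(\theta_b)G_i(\theta_b)=W_j(\theta_{b'})G_j(\theta_{b'})$; (iii) $\alpha_{i^*}(\theta_b)=0$ for all $\theta_b\notin\Theta_{i^*}$.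
   Context: There are $k\ge2$ solutions and $B$ parameter values $\theta_1,\dots,\theta_B$ with probabilities $p_1,\dots,p_B>0$, $\sum_bp_b=1$. For each $i,b$, $y_i(\theta_b)$ is a real number (mean simulation output) and $\lambda_i(\theta_b)>0$ (simulation standard deviation). Each $i^b=\arg\min_iy_i(\theta_b)$ is assumed unique, and $i^*=\arg\max_i\sum_bp_b\mathbf 1\{i=i^b\}$ is assumed unique. Favorable sets: $\Theta_i=\{\theta_b:i^b=i\}$. For an allocation $\boldsymbol\alpha=(\alpha_i(\theta_b))$ and $i\ne i^b$, $$G_i(\theta_b)=\frac{(y_i(\theta_b)-y_{i^b}(\theta_b))^2}{2\left(\lambda_i^2(\theta_b)/\alpha_i(\theta_b)+\lambda_{i^b}^2(\theta_b)/\alpha_{i^b}(\theta_b)\right)},$$ with $G_i(\theta_b)=0$ if $\alpha_i(\theta_b)=0$ or $\alpha_{i^b}(\theta_b)=0$. Let $d_j=\sum_bp_b\mathbf 1\{i^*=i^b\}-\sum_bp_b\mathbf 1\{j=i^b\}$ and $\Xi=\{(i,\theta_b):i\ne i^*,i\ne i^b\}$. Balance weights for $(i,\theta_b)\in\Xi$: $$W_i(\theta_b)=\begin{cases}\max\left\{\min\left(\min_{j\ne i^*}d_j,\ d_i/2\right)/p_b,\ 1\right\},&\theta_b\in\Theta_{i^*},\\ \max\{d_i/p_b,1\},&\theta_b\notin\Theta_{i^*}.\end{cases}$$ *)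

From mathcomp Require Import all_boot all_order all_algebra.
Set Implicit Arguments. Unset Strict Implicit. Unset Printing Implicit Defensive.
Import Order.TTheory GRing.Theory Num.Theory.
Local Open Scope ring_scope.

Section Setting.
Variables (R : realFieldType) (k B : nat).
Variables (p : 'I_B -> R) (y lam : 'I_k -> 'I_B -> R).
Variables (ib : 'I_B -> 'I_k) (istar : 'I_k).

Definition feasible (alpha : 'I_k -> 'I_B -> R) : Prop :=
  (\sum_(i < k) \sum_(b < B) alpha i b = 1) /\ (forall i b, 0 <= alpha i b).

Definition G (alpha : 'I_k -> 'I_B -> R) (i : 'I_k) (b : 'I_B) : R :=
  if (alpha i b == 0) || (alpha (ib b) b == 0) then 0
  else (y i b - y (ib b) b) ^+ 2 /
       (2 * (lam i b ^+ 2 / alpha i b + lam (ib b) b ^+ 2 / alpha (ib b) b)).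

(* probability mass of the favorable set Theta_j *)
Definition mass (j : 'I_k) : R := \sum_(b < B | ib b == j) p b.

Definition d (j : 'I_k) : R := mass istar - mass j.

Definition inXi (x : 'I_k * 'I_B) : bool := (x.1 != istar) && (x.1 != ib x.2).

Definition W (i : 'I_k) (b : 'I_B) : R :=
  if ib b == istar then
    Num.max (Num.min (\big[Num.min/ (d i / 2)]_(j < k | j != istar) d j)
                     (d i / 2) / p b) 1
  else Num.max (d i / p b) 1.

Definition WG (alpha : 'I_k -> 'I_B -> R) (x : 'I_k * 'I_B) : R :=
  W x.1 x.2 * G alpha x.1 x.2.

(* min_{x in Xi} WG alpha x <= min_{x in Xi} WG beta x, written out
   (Xi is finite and nonempty) *)
Definition obj_le (alpha beta : 'I_k -> 'I_B -> R) : Prop :=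
  exists2 x, inXi x & forall z, inXi z -> WG alpha x <= WG beta z.

Definition optimal (alpha : 'I_k -> 'I_B -> R) : Prop :=
  feasible alpha /\ forall beta, feasible beta -> obj_le beta alpha.

End Setting.

(* Only the positivity of the weights [W] matters (and [p] need not sum to 1).
   If [alpha] is optimal, every [W G] on Xi is positive, and no nonnegative
   allocation of total mass below 1 can match its minimum on all of Xi, since
   rescaling it would do better.  Hence mass on [alpha_{i^*}(theta_b)] outside
   [Theta_{i^*}] is wasted (iii); a pair above the minimum can give up part of
   its allocation (ii); and if the balance (i) fails in a column, scaling each
   entry by [1 - t + 2 t^2] with [t = +-e alpha_i / lam_i^2] keeps every
   [lam_i^2 / alpha_i + lam_{i^b}^2 / alpha_{i^b}] from increasing while the
   column mass moves by [e * (balance defect) + O(e^2)].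
   Conversely, under (i) the mass of a column is
   [sum_i w_i (lam_i^2 / alpha_i + lam_{i^b}^2 / alpha_{i^b})] with
   [w_i = alpha_i^2 / lam_i^2], so by convexity of [x^2 / c] an allocation
   beating [alpha] on every pair of Xi costs more in every column, strictly in
   a column of [Theta_{i^*}]; with (iii) this contradicts both having mass 1. *)

From mathcomp Require Import all_boot all_order all_algebra.
From mathcomp Require Import ring lra.
Set Implicit Arguments. Unset Strict Implicit. Unset Printing Implicit Defensive.
Import Order.TTheory GRing.Theory Num.Theory.
Local Open Scope ring_scope.

Section Scalar.
Variable R : realFieldType.
Implicit Types a c x L s t D M N : R.

Lemma sqr_div_ge x c : 0 < c -> 2 * x - c <= x ^+ 2 / c.
Proof. by move=> c_gt0; rewrite ler_pdivlMr //; have := sqr_ge0 (x - c); nra. Qed.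

Lemma sqr_div_mulK a L : L != 0 -> a ^+ 2 / L * (L / a) = a.
Proof.
move=> L_neq0; have [-> | a_neq0] := eqVneq a 0; first by rewrite expr0n !mul0r.
by field; rewrite a_neq0 L_neq0.
Qed.

Lemma sqr_div_eq0 x L : 0 < L -> (x ^+ 2 / L == 0) = (x == 0).
Proof. by move=> L_gt0; rewrite mulf_eq0 invr_eq0 (gt_eqF L_gt0) orbF sqrf_eq0. Qed.

Definition damp t := 1 - t + 2 * t ^+ 2.

Lemma damp_gt0 t : 0 < damp t.
Proof. rewrite /damp; nra. Qed.

(* [(1 + t) * damp t = 1 + t ^+ 2 * (1 + 2 * t)] is at least [1] when [t >= -1/2]. *)
Lemma div_damp_le L a s : 0 < L -> 0 < a -> - 2^-1 <= s * a / L ->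
  L / (a * damp (s * a / L)) <= L / a + s.
Proof.
move=> L_gt0 a_gt0; set t := s * a / L => t_ge.
have damp_t := damp_gt0 t.
rewrite ler_pdivrMr ?mulr_gt0 //.
have -> : (L / a + s) * (a * damp t) = L * ((1 + t) * damp t).
  by rewrite /t /damp; field; rewrite !gt_eqF.
by rewrite ler_pMr // /damp; nra.
Qed.

Lemma exists_descent_step D M N : D != 0 -> 0 < M -> 0 <= N ->
  exists e, e * D + 2 * e ^+ 2 * M < 0 /\ `|e| * N <= 2^-1.
Proof.
move=> D_neq0 M_gt0 N_ge0.
have MDN_gt0 : 0 < M + `|D| * N by rewrite ltr_wpDr // mulr_ge0.
pose eta := (4 * (M + `|D| * N))^-1.
have eta_gt0 : 0 < eta by rewrite invr_gt0 mulr_gt0.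
have eta_split : 4 * (eta * M) + 4 * (eta * (`|D| * N)) = 1.
  by rewrite /eta; field; rewrite gt_eqF.
have etaDN_ge0 : 0 <= eta * (`|D| * N) by rewrite !mulr_ge0 // ltW.
have etaM_gt0 : 0 < eta * M by rewrite mulr_gt0.
exists (- D * eta); split.
  have -> : - D * eta * D + 2 * (- D * eta) ^+ 2 * M = D ^+ 2 * eta * (2 * (eta * M) - 1).
    by ring.
  have D2_gt0 : 0 < D ^+ 2 by rewrite exprn_even_gt0.
  by rewrite pmulr_rlt0 ?(mulr_gt0 D2_gt0 eta_gt0) //; lra.
rewrite normrM normrN (gtr0_norm eta_gt0).
have -> : `|D| * eta * N = eta * (`|D| * N) by ring.
lra.
Qed.

Lemma mul_damp_expand a s L : L != 0 ->
  a * damp (s * a / L) = a - s * (a ^+ 2 / L) + 2 * s ^+ 2 * (a ^+ 3 / L ^+ 2).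
Proof. by move=> L_neq0; rewrite /damp; field. Qed.

Lemma sum_set_entry (I : finType) (f : I -> R) j x :
  \sum_i (if i == j then x else f i) = \sum_i f i - f j + x.
Proof.
rewrite (bigD1 j) //= [in RHS](bigD1 j) //= eqxx [f j + _]addrC addrK addrC.
by congr (_ + _); apply: eq_bigr => i /negbTE ->.
Qed.

End Scalar.

(* A column [theta_b] of an allocation as a vector [a] over the solutions:
   [i0] is [i^b], [S] the [i] with [(i, theta_b)] in Xi, [L i = lam_i^2] and
   [C i = (y_i - y_{i^b})^2], so that [rate a i] is [G_i(theta_b)]. *)
Section Column.
Variables (R : realFieldType) (I : finType) (i0 : I) (S : pred I) (L C : I -> R).
Hypothesis L_gt0 : forall i, 0 < L i.
Hypothesis C_gt0 : forall i, S i -> 0 < C i.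
Hypothesis S_head : ~~ S i0.
Implicit Types a c : I -> R.

Definition diffvar a i := L i / a i + L i0 / a i0.

Definition rate a i :=
  if (a i == 0) || (a i0 == 0) then 0 else C i / (2 * diffvar a i).

Definition balance a := a i0 ^+ 2 / L i0 - \sum_(i | S i) a i ^+ 2 / L i.

Definition budget a := a i0 + \sum_(i | S i) a i.

Lemma diffvar_gt0 a i : 0 < a i -> 0 < a i0 -> 0 < diffvar a i.
Proof. by move=> ai_gt0 a0_gt0; rewrite addr_gt0 ?divr_gt0. Qed.

Lemma rateE a i : 0 < a i -> 0 < a i0 -> rate a i = C i / (2 * diffvar a i).
Proof. by move=> ai_gt0 a0_gt0; rewrite /rate !gt_eqF. Qed.

Lemma rate_ge0 a i : S i -> 0 <= a i -> 0 <= a i0 -> 0 <= rate a i.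
Proof.
move=> Si ai_ge0 a0_ge0; rewrite /rate; case: ifP => // _.
by rewrite divr_ge0 ?mulr_ge0 ?addr_ge0 ?divr_ge0 ?(ltW (L_gt0 _)) ?(ltW (C_gt0 Si)).
Qed.

Lemma rate_gt0 a i : S i -> 0 < a i -> 0 < a i0 -> 0 < rate a i.
Proof.
by move=> Si ai_gt0 a0_gt0; rewrite rateE // divr_gt0 ?mulr_gt0 ?C_gt0 ?diffvar_gt0.
Qed.

Lemma rate_neq0 a i : rate a i != 0 -> a i != 0 /\ a i0 != 0.
Proof. by rewrite /rate; case: ifP => [_|/norP[]//]; rewrite eqxx. Qed.

Lemma eq_rate a c i : a i = c i -> a i0 = c i0 -> rate a i = rate c i.
Proof. by rewrite /rate /diffvar => -> ->. Qed.

Lemma rateZ a t i : 0 < t -> rate (fun j => t * a j) i = t * rate a i.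
Proof.
move=> t_gt0; rewrite /rate !mulf_eq0 (gt_eqF t_gt0) /=.
case: ifP => _; first by rewrite mulr0.
have -> : diffvar (fun j => t * a j) i = t^-1 * diffvar a i.
  by rewrite /diffvar !invfM; ring.
by rewrite !invfM invrK; ring.
Qed.

Lemma ltr_rate a c i : S i -> 0 < a i -> 0 < a i0 -> 0 < c i -> 0 < c i0 ->
  (rate a i < rate c i) = (diffvar c i < diffvar a i).
Proof.
move=> Si *; rewrite !rateE // ltr_pM2l ?C_gt0 //.
by rewrite ltf_pV2 ?posrE ?mulr_gt0 ?diffvar_gt0 // ltr_pM2l.
Qed.

Lemma ler_rate a c i : S i -> 0 < a i -> 0 < a i0 -> 0 < c i -> 0 < c i0 ->
  (rate a i <= rate c i) = (diffvar c i <= diffvar a i).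
Proof.
move=> Si *; rewrite !rateE // ler_pM2l ?C_gt0 //.
by rewrite lef_pV2 ?posrE ?mulr_gt0 ?diffvar_gt0 // ler_pM2l.
Qed.

Lemma rate_mono a c i : S i -> 0 < a i -> a i <= c i -> 0 < a i0 -> a i0 <= c i0 ->
  rate a i <= rate c i.
Proof.
move=> Si ai_gt0 aci a0_gt0 ac0.
have ci_gt0 := lt_le_trans ai_gt0 aci; have c0_gt0 := lt_le_trans a0_gt0 ac0.
by rewrite ler_rate // lerD // ler_pM2l // lef_pV2.
Qed.

Lemma S_neq_head i : S i -> i != i0.
Proof. by apply: contraTneq => ->. Qed.

Lemma sum_budget a : \sum_i a i = budget a + \sum_(i | (i != i0) && ~~ S i) a i.
Proof.
rewrite (bigD1 i0) //= (bigID S) /= addrA; congr (_ + _ + _).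
by apply: eq_bigl => i; case: eqP => // ->; rewrite (negbTE S_head).
Qed.

Lemma balance0_sum a : balance a = 0 ->
  \sum_(i | S i) a i ^+ 2 / L i = a i0 ^+ 2 / L i0.
Proof. by move=> bal; apply/eqP; rewrite eq_sym -subr_eq0; apply/eqP. Qed.

Lemma balance0_head_eq0 a : balance a = 0 -> a i0 = 0 <-> forall i, S i -> a i = 0.
Proof.
move/balance0_sum => bal.
have sq_ge0 i : 0 <= a i ^+ 2 / L i by rewrite divr_ge0 ?sqr_ge0 ?ltW.
split=> [a0_eq0 i Si | aS_eq0].
  apply/eqP; rewrite -(sqr_div_eq0 _ (L_gt0 i)); apply/eqP; move: i Si.
  by apply/psumr_eq0P => //; rewrite bal a0_eq0 expr0n mul0r.
apply/eqP; rewrite -(sqr_div_eq0 _ (L_gt0 i0)) -bal; apply/eqP.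
by apply: big1 => i Si; rewrite aS_eq0 // expr0n mul0r.
Qed.

Lemma weighted_diffvar_eq_budget a : balance a = 0 ->
  \sum_(i | S i) a i ^+ 2 / L i * diffvar a i = budget a.
Proof.
move=> bal; rewrite /diffvar.
under eq_bigr => i _ do rewrite mulrDr (sqr_div_mulK _ (lt0r_neq0 (L_gt0 i))).
by rewrite big_split /= -mulr_suml balance0_sum // sqr_div_mulK ?gt_eqF // /budget addrC.
Qed.

Lemma weighted_diffvar_ge a c : balance a = 0 -> 0 < c i0 -> (forall i, S i -> 0 < c i) ->
  2 * budget a - budget c <= \sum_(i | S i) a i ^+ 2 / L i * diffvar c i.
Proof.
move=> bal c0_gt0 cS_gt0; rewrite /diffvar.
under eq_bigr => i _ do rewrite mulrDr mulrA (divfK (lt0r_neq0 (L_gt0 i))).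
rewrite big_split /= -mulr_suml balance0_sum // mulrA divfK ?gt_eqF //.
have tangent : \sum_(i | S i) (2 * a i - c i) <= \sum_(i | S i) a i ^+ 2 / c i.
  by apply: ler_sum => i Si; exact: sqr_div_ge (cS_gt0 i Si).
have := sqr_div_ge (a i0) c0_gt0.
by move: tangent; rewrite /budget sumrB -mulr_sumr; lra.
Qed.

(* Weighted by [a i ^+ 2 / L i], the hypotheses [diffvar c i < diffvar a i]
   sum to [2 * budget a - budget c < budget a]. *)
Lemma budget_lt a c i1 : (forall i, 0 <= a i) -> (forall i, 0 <= c i) ->
  balance a = 0 -> (forall i, S i -> rate a i < rate c i) -> S i1 ->
  budget a < budget c.
Proof.
move=> a_ge0 c_ge0 bal rate_lt Si1.
have c_gt0 i : S i -> 0 < c i /\ 0 < c i0.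
  move=> Si; have /rate_neq0[ci_neq0 c0_neq0] : rate c i != 0.
    by rewrite gt_eqF // (le_lt_trans (rate_ge0 Si (a_ge0 i) (a_ge0 i0))) ?rate_lt.
  by rewrite !lt0r ci_neq0 c0_neq0 !c_ge0.
have [_ c0_gt0] := c_gt0 i1 Si1.
have [a0_eq0 | a0_neq0] := eqVneq (a i0) 0.
  rewrite /budget a0_eq0 big1 ?addr0; last exact: (balance0_head_eq0 bal).1.
  by rewrite (lt_le_trans c0_gt0) // lerDl sumr_ge0.
have [i2 Si2 ai2_neq0] : exists2 i, S i & a i != 0.
  case: (pickP (fun i => S i && (a i != 0))) => [i /andP[] | none]; first by exists i.
  case/eqP: a0_neq0; apply/(balance0_head_eq0 bal) => i Si.
  by move: (none i); rewrite Si => /negbT/negPn/eqP.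
have weight_lt i : S i -> a i != 0 ->
    a i ^+ 2 / L i * diffvar c i < a i ^+ 2 / L i * diffvar a i.
  move=> Si ai_neq0; have [ci_gt0 _] := c_gt0 i Si.
  have ai_gt0 : 0 < a i by rewrite lt0r ai_neq0 a_ge0.
  have a0_gt0 : 0 < a i0 by rewrite lt0r a0_neq0 a_ge0.
  by rewrite ltr_pM2l ?divr_gt0 ?exprn_gt0 // -ltr_rate ?rate_lt.
have : \sum_(i | S i) a i ^+ 2 / L i * diffvar c i < budget a.
  rewrite -(weighted_diffvar_eq_budget bal) (bigD1 i2) //= [X in _ < X](bigD1 i2) //=.
  rewrite ltr_leD ?weight_lt // ler_sum // => i /andP[Si _].
  have [ai_eq0 | ai_neq0] := eqVneq (a i) 0; last exact/ltW/weight_lt.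
  by rewrite ai_eq0 expr0n !mul0r.
have := weighted_diffvar_ge bal c0_gt0 (fun i Si => (c_gt0 i Si).1).
lra.
Qed.

Lemma budget_le a c : (forall i, 0 <= a i) -> (forall i, 0 <= c i) ->
  balance a = 0 -> (forall i, S i -> rate a i < rate c i) -> budget a <= budget c.
Proof.
move=> a_ge0 c_ge0 bal rate_lt.
case: (pickP S) => [i1 Si1 | S0]; first exact/ltW/(budget_lt a_ge0 c_ge0 bal rate_lt Si1).
rewrite /budget !big_pred0 // !addr0 ((balance0_head_eq0 bal).2 _) ?c_ge0 //.
by move=> i; rewrite S0.
Qed.

(* Scaling [a i] by [damp (e * a i / L i)] lowers [L i / a i] by at most [e]
   (with [- e] at [i0]), so no [diffvar] increases, while [budget] moves by
   [e * balance a] to first order. *)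
Definition perturb e a i :=
  if i == i0 then a i * damp (- e * a i / L i)
  else if S i then a i * damp (e * a i / L i) else a i.

Definition curvature a := a i0 ^+ 3 / L i0 ^+ 2 + \sum_(i | S i) a i ^+ 3 / L i ^+ 2.

Lemma budget_perturb e a :
  budget (perturb e a) = budget a + e * balance a + 2 * e ^+ 2 * curvature a.
Proof.
rewrite /budget /perturb eqxx mul_damp_expand ?lt0r_neq0 //.
rewrite (eq_bigr (fun i => a i - e * (a i ^+ 2 / L i) + 2 * e ^+ 2 * (a i ^+ 3 / L i ^+ 2))).
  by rewrite !big_split /= sumrN -!mulr_sumr /balance /curvature; ring.
by move=> i Si; rewrite (negbTE (S_neq_head Si)) Si mul_damp_expand ?lt0r_neq0.
Qed.

Lemma diffvar_perturb_le e a i : S i -> 0 < a i -> 0 < a i0 ->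
  - 2^-1 <= e * a i / L i -> - 2^-1 <= - e * a i0 / L i0 ->
  diffvar (perturb e a) i <= diffvar a i.
Proof.
move=> Si ai_gt0 a0_gt0 lo_i lo_0.
rewrite /diffvar /perturb eqxx (negbTE (S_neq_head Si)) Si.
have := div_damp_le (L_gt0 i) ai_gt0 lo_i; have := div_damp_le (L_gt0 i0) a0_gt0 lo_0.
lra.
Qed.

Lemma exists_cheaper_column a : (forall i, 0 <= a i) -> 0 < a i0 ->
  (forall i, S i -> 0 < a i) -> balance a != 0 ->
  exists c, [/\ forall i, 0 <= c i, forall i, i != i0 -> ~~ S i -> c i = a i,
    forall i, S i -> rate a i <= rate c i & budget c < budget a].
Proof.
move=> a_ge0 a0_gt0 aS_gt0 bal_neq0.
have ratio_ge0 i : 0 <= a i / L i by rewrite divr_ge0 ?a_ge0 ?ltW.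
pose N := a i0 / L i0 + \sum_(i | S i) a i / L i.
have ratio_le i : (i == i0) || S i -> a i / L i <= N.
  case/orP => [/eqP -> | Si]; first by rewrite lerDl sumr_ge0.
  by rewrite /N (bigD1 i) //= addrCA lerDl addr_ge0 ?sumr_ge0.
have curvature_gt0 : 0 < curvature a.
  rewrite /curvature ltr_wpDr ?divr_gt0 ?exprn_gt0 ?L_gt0 //.
  by apply: sumr_ge0 => i _; rewrite divr_ge0 ?exprn_ge0 ?a_ge0 ?(ltW (L_gt0 i)).
have N_ge0 : 0 <= N by rewrite addr_ge0 ?sumr_ge0.
have [e [descent small]] := exists_descent_step bal_neq0 curvature_gt0 N_ge0.
have step_ge s i : `|s| = `|e| -> (i == i0) || S i -> - 2^-1 <= s * a i / L i.
  move=> s_e iS; rewrite -mulrA; apply: lerNnormlW.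
  rewrite normrM s_e (ger0_norm (ratio_ge0 i)) (le_trans _ small) //.
  by rewrite ler_wpM2l ?ratio_le.
have perturb_gt0 i : (i == i0) || S i -> 0 < perturb e a i.
  case/orP => [/eqP -> | Si]; rewrite /perturb ?eqxx ?(negbTE (S_neq_head Si)) ?Si.
    by rewrite mulr_gt0 ?damp_gt0.
  by rewrite mulr_gt0 ?damp_gt0 ?aS_gt0.
exists (perturb e a); split.
- move=> i; case: (boolP ((i == i0) || S i)) => [/perturb_gt0/ltW // | /norP[i_neq0 Si]].
  by rewrite /perturb (negbTE i_neq0) (negbTE Si).
- by move=> i i_neq0 Si; rewrite /perturb (negbTE i_neq0) (negbTE Si).
- move=> i Si; have ai_gt0 := aS_gt0 i Si.
  have pi_gt0 : 0 < perturb e a i by rewrite perturb_gt0 ?Si ?orbT.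
  have p0_gt0 : 0 < perturb e a i0 by rewrite perturb_gt0 ?eqxx.
  rewrite ler_rate //; apply: diffvar_perturb_le => //; apply: step_ge;
    by rewrite ?normrN ?eqxx ?Si ?orbT.
- by rewrite budget_perturb; lra.
Qed.

End Column.

Section Allocation.
Variables (R : realFieldType) (k B : nat) (p : 'I_B -> R) (y lam : 'I_k -> 'I_B -> R).
Variables (ib : 'I_B -> 'I_k) (istar : 'I_k).
Hypothesis k_ge2 : (2 <= k)%N.
Hypothesis p_gt0 : forall b, 0 < p b.
Hypothesis lam_gt0 : forall i b, 0 < lam i b.
Hypothesis ib_best : forall b i, i != ib b -> y (ib b) b < y i b.
Hypothesis istar_best : forall j, j != istar -> mass p ib j < mass p ib istar.

Local Notation G := (G y lam ib).
Local Notation W := (W p ib istar).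
Local Notation WG := (WG p y lam ib istar).
Local Notation Xi := (inXi ib istar).
Local Notation optimal := (optimal p y lam ib istar).
Local Notation total a := (\sum_(i < k) \sum_(b < B) a i b).
Local Notation col a b := (fun i => a i b).
Local Notation lam2 b := (fun i => lam i b ^+ 2).
Local Notation gap2 b := (fun i => (y i b - y (ib b) b) ^+ 2).
Implicit Types (a c : 'I_k -> 'I_B -> R) (v : 'I_k -> R).

Definition rivals b i := (i != ib b) && (i != istar).

Lemma inXiE x : Xi x = rivals x.2 x.1.
Proof. by rewrite /inXi /rivals andbC. Qed.

Lemma rivals_head b : ~~ rivals b (ib b).
Proof. by rewrite /rivals eqxx. Qed.

Lemma lam2_gt0 b i : 0 < lam i b ^+ 2.
Proof. exact: exprn_gt0. Qed.

Lemma gap2_gt0 b i : rivals b i -> 0 < (y i b - y (ib b) b) ^+ 2.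
Proof.
by case/andP=> /ib_best lt _; rewrite exprn_even_gt0 //= subr_eq0 gt_eqF.
Qed.

Lemma G_col a i b : G a i b = rate (ib b) (lam2 b) (gap2 b) (col a b) i.
Proof. by []. Qed.

Lemma W_gt0 i b : 0 < W i b.
Proof. by rewrite /W; case: ifP => _; rewrite (lt_le_trans ltr01) // le_max lexx orbT. Qed.

Lemma exists_rival : exists j : 'I_k, j != istar.
Proof.
have k_gt0 : (0 < k)%N by apply: leq_trans k_ge2.
have [-> | neq] := eqVneq istar (Ordinal k_gt0); last by exists (Ordinal k_gt0); rewrite eq_sym.
by exists (Ordinal k_ge2); apply/eqP => -[].
Qed.

Lemma exists_istar_column : exists b, ib b = istar.
Proof.
have [bs /eqP | none] := pickP (fun b => ib b == istar); first by exists bs.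
have [j /istar_best] := exists_rival.
have -> : mass p ib istar = 0 by apply: big_pred0 => b; rewrite none.
by rewrite ltNge sumr_ge0 // => b _; rewrite ltW.
Qed.

Lemma kB_gt0 : (0 < k * B)%N.
Proof.
have [b _] := exists_istar_column.
by rewrite muln_gt0 (leq_trans _ k_ge2) //= (leq_ltn_trans _ (ltn_ord b)).
Qed.

Lemma uniform_feasible : feasible (fun (_ : 'I_k) (_ : 'I_B) => ((k * B)%:R : R)^-1).
Proof.
split=> [|i b]; last by rewrite invr_ge0 ler0n.
have kB_neq0 : (k * B)%:R != 0 :> R by rewrite pnatr_eq0 -lt0n kB_gt0.
by rewrite !sumr_const !card_ord -mulrnA (mulnC B) -[RHS](mulVf kB_neq0) mulr_natr.
Qed.

Lemma optimal_min a : optimal a -> exists2 m, Xi m & forall z, Xi z -> WG a m <= WG a z.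
Proof. by case=> feas; apply. Qed.

Lemma optimal_WG_gt0 a z : optimal a -> Xi z -> 0 < WG a z.
Proof.
case=> _ /(_ _ uniform_feasible) [x Xx le]; move/le; apply: lt_le_trans.
have unif_gt0 : 0 < ((k * B)%:R : R)^-1 by rewrite invr_gt0 ltr0n kB_gt0.
by rewrite /WG mulr_gt0 ?W_gt0 // G_col (rate_gt0 (lam2_gt0 x.2) (@gap2_gt0 x.2)) -?inXiE.
Qed.

Lemma optimal_entries_gt0 a x : optimal a -> Xi x ->
  0 < a x.1 x.2 /\ 0 < a (ib x.2) x.2.
Proof.
move=> opt Xx; have [[_ a_ge0] _] := opt.
have := optimal_WG_gt0 opt Xx.
rewrite /WG G_col pmulr_rgt0 ?W_gt0 // => /lt0r_neq0/rate_neq0[ax_neq0 a0_neq0].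
by rewrite !lt0r ax_neq0 a0_neq0 !a_ge0.
Qed.

Lemma WGZ a t x : 0 < t -> WG (fun i b => t * a i b) x = t * WG a x.
Proof. by move=> t_gt0; rewrite /WG !G_col rateZ // mulrCA. Qed.

(* Rescaling [c] to unit total would otherwise beat the optimal value. *)
Lemma optimal_total_ge1 a c m : optimal a -> Xi m -> (forall i b, 0 <= c i b) ->
  (forall z, Xi z -> WG a m <= WG c z) -> 1 <= total c.
Proof.
move=> opt Xm c_ge0 dom; rewrite leNgt; apply/negP => total_lt1.
have WGa_gt0 := optimal_WG_gt0 opt Xm.
have := lt_le_trans WGa_gt0 (dom m Xm).
rewrite /WG G_col pmulr_rgt0 ?W_gt0 // => /lt0r_neq0/rate_neq0[cm_neq0 _].
have total_gt0 : 0 < total c.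
  apply: (lt_le_trans (_ : 0 < c m.1 m.2)); first by rewrite lt0r cm_neq0 c_ge0.
  rewrite (bigD1 m.1) //= (bigD1 m.2) //= -addrA lerDl addr_ge0 ?sumr_ge0 // => *.
  exact: sumr_ge0.
have scaled_feasible : feasible (fun i b => (total c)^-1 * c i b).
  split=> [|i b]; last by rewrite mulr_ge0 ?invr_ge0 ?c_ge0 // ltW.
  by under eq_bigr do rewrite -mulr_sumr; rewrite -mulr_sumr mulVf ?gt_eqF.
have [x Xx le_x] := opt.2 _ scaled_feasible.
have WGc_gt0 := lt_le_trans WGa_gt0 (dom x Xx).
move: (le_trans (le_x m Xm) (dom x Xx)).
rewrite WGZ ?invr_gt0 // ger_pMl // invf_le1 // => /(lt_le_trans total_lt1).
by rewrite ltxx.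
Qed.

Definition setcol a b v := fun i b' => if b' == b then v i else a i b'.

Lemma total_setcol a b v : total (setcol a b v) = total a - \sum_i a i b + \sum_i v i.
Proof.
rewrite (eq_bigr (fun i => \sum_(b' < B) a i b' - a i b + v i)) => [|i _].
  by rewrite !big_split /= sumrN.
exact: sum_set_entry.
Qed.

Lemma G_setcol a b v i b' :
  G (setcol a b v) i b' = if b' == b then rate (ib b) (lam2 b) (gap2 b) v i else G a i b'.
Proof.
by rewrite !G_col /setcol; case: eqP => [-> | _].
Qed.

Lemma optimal_col_sum_le a m b v : optimal a -> Xi m ->
  (forall z, Xi z -> WG a m <= WG a z) -> (forall i, 0 <= v i) ->
  (forall i, rivals b i -> WG a m <= W i b * rate (ib b) (lam2 b) (gap2 b) v i) ->
  \sum_i a i b <= \sum_i v i.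
Proof.
move=> opt Xm min_m v_ge0 dom_b; have [[total_a a_ge0] _] := opt.
have : 1 <= total (setcol a b v).
  apply: (optimal_total_ge1 opt Xm) => [i b' | [i b'] Xz].
    by rewrite /setcol; case: ifP.
  rewrite {2}/WG G_setcol /=; case: eqP => [eq_b | _]; last exact: (min_m (i, b')).
  by subst b'; apply: dom_b; move: Xz; rewrite inXiE.
by rewrite total_setcol total_a; lra.
Qed.

Lemma optimal_off_istar a b : optimal a -> ib b != istar -> a istar b = 0.
Proof.
move=> opt ib_neq; have [[_ a_ge0] _] := opt; have [m Xm min_m] := optimal_min opt.
apply/le_anti; rewrite a_ge0 andbT.
have : \sum_i a i b <= \sum_i (if i == istar then 0 else a i b).
  apply: (optimal_col_sum_le opt Xm min_m) => [i | i Ri]; first by case: ifP.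
  have [_ i_neq] := andP Ri.
  rewrite -(@eq_rate _ _ _ _ _ (col a b)) /= ?(negbTE i_neq) ?(negbTE ib_neq) //.
  by apply: (min_m (i, b)); rewrite inXiE.
by rewrite sum_set_entry; lra.
Qed.

Lemma optimal_WG_min a m x : optimal a -> Xi m ->
  (forall z, Xi z -> WG a m <= WG a z) -> Xi x -> WG a x = WG a m.
Proof.
move=> opt Xm min_m Xx; apply/eqP; rewrite eq_le min_m // andbT leNgt.
apply/negP => lt_mx; have [[_ a_ge0] _] := opt.
have [ax_gt0 a0_gt0] := optimal_entries_gt0 opt Xx.
have WGx_gt0 := optimal_WG_gt0 opt Xx.
pose r := WG a m / WG a x.
have r_gt0 : 0 < r by rewrite divr_gt0 ?optimal_WG_gt0.
have r_lt1 : r < 1 by rewrite ltr_pdivrMr // mul1r.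
have x_ib : x.1 != ib x.2 by move: Xx; rewrite inXiE => /andP[].
have : \sum_i a i x.2 <= \sum_i (if i == x.1 then r * a x.1 x.2 else a i x.2).
  apply: (optimal_col_sum_le opt Xm min_m) => [i | i Ri].
    by case: ifP => _; [exact: mulr_ge0 (ltW r_gt0) (a_ge0 _ _) | exact: a_ge0].
  have [-> {i Ri} | i_neq] := eqVneq i x.1.
    have -> : WG a m = r * WG a x by rewrite /r divfK ?gt_eqF.
    rewrite /WG mulrCA ler_pM2l ?W_gt0 // G_col -rateZ //.
    apply: (rate_mono (lam2_gt0 x.2) (@gap2_gt0 x.2)) => /=.
    - by rewrite -inXiE.
    - by rewrite mulr_gt0.
    - by rewrite eqxx.
    - by rewrite mulr_gt0.
    by rewrite eq_sym (negbTE x_ib) ler_piMl ?a_ge0 ?ltW.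
  rewrite -(@eq_rate _ _ _ _ _ (col a x.2)) /= ?(negbTE i_neq) 1?eq_sym ?(negbTE x_ib) //.
  by apply: (min_m (i, x.2)); rewrite inXiE.
by rewrite (sum_set_entry (fun i => a i x.2)) => le; nra.
Qed.

Lemma optimal_WG_const a x z : optimal a -> Xi x -> Xi z -> WG a x = WG a z.
Proof.
move=> opt Xx Xz; have [m Xm min_m] := optimal_min opt.
by rewrite !(optimal_WG_min opt Xm min_m).
Qed.

Lemma optimal_balanced a b : optimal a ->
  a (ib b) b ^+ 2 / lam (ib b) b ^+ 2 = \sum_(i | rivals b i) a i b ^+ 2 / lam i b ^+ 2.
Proof.
move=> opt; apply/eqP; rewrite -subr_eq0; apply/eqP.
have [[_ a_ge0] _] := opt; have [m Xm min_m] := optimal_min opt.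
have rival_gt0 i : rivals b i -> 0 < a i b /\ 0 < a (ib b) b.
  by move=> Ri; apply: (optimal_entries_gt0 opt (x := (i, b))); rewrite inXiE.
have [a0_eq0 | a0_neq0] := eqVneq (a (ib b) b) 0.
  rewrite a0_eq0 expr0n mul0r big1 ?subr0 // => i /rival_gt0[_].
  by rewrite a0_eq0 ltxx.
apply/eqP; apply: contraT => bal_neq0.
have a0_gt0 : 0 < a (ib b) b by rewrite lt0r a0_neq0 a_ge0.
have [c [c_ge0 c_out rate_le cheaper]] := exists_cheaper_column (lam2_gt0 b)
  (@gap2_gt0 b) (rivals_head b) (fun i => a_ge0 i b) a0_gt0
  (fun i Ri => (rival_gt0 i Ri).1) bal_neq0.
have : \sum_i a i b <= \sum_i c i.
  apply: (optimal_col_sum_le opt Xm min_m c_ge0) => i Ri.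
  apply: le_trans (min_m (i, b) _) _; first by rewrite inXiE.
  by rewrite /WG ler_pM2l ?W_gt0 //; exact: rate_le.
have rest_eq : \sum_(i | (i != ib b) && ~~ rivals b i) c i =
                \sum_(i | (i != ib b) && ~~ rivals b i) a i b.
  by apply: eq_bigr => i /andP[]; exact: c_out.
by rewrite !(sum_budget (rivals_head b)) rest_eq; lra.
Qed.

Lemma balanced_optimal a : feasible a ->
  (forall b, a (ib b) b ^+ 2 / lam (ib b) b ^+ 2 =
             \sum_(i | rivals b i) a i b ^+ 2 / lam i b ^+ 2) ->
  (forall x z, Xi x -> Xi z -> WG a x = WG a z) ->
  (forall b, ib b != istar -> a istar b = 0) -> optimal a.
Proof.
move=> feas bal WG_const off_istar; split=> // c [total_c c_ge0].
have [total_a a_ge0] := feas.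
have bal0 b : balance (ib b) (rivals b) (lam2 b) (col a b) = 0.
  by apply/eqP; rewrite /balance /= subr_eq0 bal.
have [x /andP[Xx le_x] | none] := pickP (fun x => Xi x && (WG c x <= WG a x)).
  by exists x => // z Xz; rewrite -(WG_const x z).
have G_lt b i : rivals b i -> G a i b < G c i b.
  move=> Ri; have := none (i, b); rewrite inXiE Ri /= => /negbT.
  by rewrite -ltNge /WG ltr_pM2l ?W_gt0.
have sum_a b : \sum_i a i b = budget (ib b) (rivals b) (col a b).
  rewrite (sum_budget (rivals_head b)) big1 ?addr0 // => i /andP[i_neq].
  by rewrite /rivals i_neq negbK => /eqP i_istar; subst i; apply: off_istar; rewrite eq_sym.
have sum_c b : budget (ib b) (rivals b) (col c b) <= \sum_i c i b.
  by rewrite (sum_budget (rivals_head b)) lerDl sumr_ge0.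
have [bs bs_istar] := exists_istar_column; have [j j_neq] := exists_rival.
have : \sum_b budget (ib b) (rivals b) (col a b) < \sum_b budget (ib b) (rivals b) (col c b).
  rewrite (bigD1 bs) //= [X in _ < X](bigD1 bs) //= ltr_leD //.
    apply: (budget_lt (lam2_gt0 bs) (@gap2_gt0 bs) (i1 := j) _ _ (bal0 bs) (G_lt bs)) => //.
    by rewrite /rivals bs_istar j_neq.
  by apply: ler_sum => b _; apply: (budget_le (lam2_gt0 b) (@gap2_gt0 b) _ _ (bal0 b) (G_lt b)).
have -> : \sum_b budget (ib b) (rivals b) (col a b) = 1.
  by rewrite -total_a exchange_big; apply: eq_bigr => b _; rewrite sum_a.
have : \sum_b budget (ib b) (rivals b) (col c b) <= 1.
  by rewrite -total_c exchange_big; apply: ler_sum => b _; exact: sum_c.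
lra.
Qed.

End Allocation.

Theorem theorem3 (R : realFieldType) (k B : nat)
  (p : 'I_B -> R) (y lam : 'I_k -> 'I_B -> R)
  (ib : 'I_B -> 'I_k) (istar : 'I_k)
  (hk : (2 <= k)%N)
  (hp : forall b, 0 < p b) (hpsum : \sum_(b < B) p b = 1)
  (hlam : forall i b, 0 < lam i b)
  (hib : forall b i, i != ib b -> y (ib b) b < y i b)
  (histar : forall j, j != istar -> mass p ib j < mass p ib istar)
  (alpha : 'I_k -> 'I_B -> R) :
  feasible alpha ->
  (optimal p y lam ib istar alpha <->
   [/\ (forall b : 'I_B,
          alpha (ib b) b ^+ 2 / lam (ib b) b ^+ 2 =
          \sum_(i < k | (i != ib b) && (i != istar)) alpha i b ^+ 2 / lam i b ^+ 2),
       (forall x z, inXi ib istar x -> inXi ib istar z ->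
          WG p y lam ib istar alpha x = WG p y lam ib istar alpha z)
     & (forall b : 'I_B, ib b != istar -> alpha istar b = 0)]).
Proof.
move=> feas; split=> [opt | [bal WG_const off_istar]].
  split=> [b | x z | b].
  - exact: (optimal_balanced hk hp hlam hib histar).
  - exact: (optimal_WG_const hk hp hlam hib histar).
  - exact: (optimal_off_istar hk hp hlam hib histar).
exact: (balanced_optimal hk hp hlam hib histar).
Qed.
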